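(* Let $\mathcal{T}$ be a binary phylogenetic $X$-tree with $n=|X|\ge 4$ leaves. Then there exist $k\ge n/4$ pairs of leaves $\{a_1,b_1\},\dots,\{a_k,b_k\}$, pairwise disjoint as sets, such that (i) for every $i$, the distance $d_{\mathcal{T}}(a_i,b_i)$ is $2$ or $3$; and (ii) for $i\ne j$, the $a_i$–$b_i$ path and the $a_j$–$b_j$ path in $\mathcal{T}$ are edge-disjoint.
   Context: A phylogenetic $X$-tree is a finite tree whose leaves (degree-1 vertices) are bijectively labelled by the elements of $X$; it is binary if every vertex has degree 1 or 3. $d_{\mathcal{T}}(u,v)$ denotes the number of edges on the unique path between vertices $u,v$ of $\mathcal{T}$. *)

From mathcomp Require Import all_boot.
Set Implicit Arguments. Unset Strict Implicit. Unset Printing Implicit Defensive.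

Section Graphs.
Variables (V : finType) (e : rel V).

Definition simple_graph : Prop := symmetric e /\ irreflexive e.

Definition deg (x : V) : nat := #|[set y | e x y]|.

Definition connected_graph : Prop := forall u v : V, connect e u v.

Definition acyclic : Prop :=
  forall c : seq V, 3 <= size c -> uniq c -> ~~ cycle e c.

Definition is_tree : Prop := simple_graph /\ connected_graph /\ acyclic.

Definition is_leaf (x : V) : bool := deg x == 1.

Definition binary : Prop := forall x : V, deg x = 1 \/ deg x = 3.

Definition simple_path (u v : V) (p : seq V) : bool :=
  [&& path e u p, last u p == v & uniq (u :: p)].

Definition path_edges (u : V) (p : seq V) : seq {set V} :=
  [seq [set xy.1; xy.2] | xy <- zip (u :: p) p].
End Graphs.

Definition phylo_tree (X V : finType) (e : rel V) (lab : X -> V) : Prop :=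
  is_tree e /\ injective lab /\ (forall x : V, is_leaf e x <-> exists y, lab y = x).

Definition binary_phylo_tree (X V : finType) (e : rel V) (lab : X -> V) : Prop :=
  phylo_tree e lab /\ binary e.

From mathcomp Require Import all_boot zify.
Set Implicit Arguments. Unset Strict Implicit. Unset Printing Implicit Defensive.

(* Call an interior vertex a cherry, a single or bare according as two, one or
   no leaves hang off it; with n >= 4 leaves no vertex carries three. Then
   n = 2c + s, and since the interior vertices span a tree of maximum degree 3,
   b + 2 <= c and 2s <= 2m + c + 3b, where m counts the edges between singles.
   Pair the two leaves of each cherry (a path of length 2), and the leaves of
   the two ends of each edge of a maximum matching among the singles (a path of
   length 3). A maximum matching in a graph of maximum degree d has at least
   1/(2d-1) of its edges, so there are at least m/3 pairs of the second kind,
   and the inequalities give n <= 4k. The paths are edge-disjoint: each uses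
   the pendant edges of its own two leaves and at most one edge between two
   singles, which carry no leaves besides these two. *)

Lemma sum_boolE (T : finType) (A : {pred T}) (P : pred T) :
  \sum_(x in A) P x = #|[set x in A | P x]|.
Proof.
rewrite -sum1_card big_mkcond [RHS]big_mkcond /=.
by apply: eq_bigr => x _; rewrite inE; case: (x \in A); case: (P x).
Qed.

Lemma sum_boolT (T : finType) (P : pred T) : \sum_x P x = #|[set x | P x]|.
Proof.
rewrite -sum1_card [RHS]big_mkcond.
by apply: eq_bigr => x _; rewrite inE; case: (P x).
Qed.

Lemma leq_sum_subset (T : finType) (A B : {pred T}) (F : T -> nat) :
  A \subset B -> \sum_(i in A) F i <= \sum_(i in B) F i.
Proof.
move=> AB; rewrite big_mkcond [X in _ <= X]big_mkcond leq_sum // => i _.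
by case: ifP => // /(subsetP AB) ->.
Qed.

Section Forest.
Variables (V : finType) (e : rel V).
Hypotheses (e_sym : symmetric e) (e_irr : irreflexive e) (e_acyc : acyclic e).

Lemma acyclic_no_chord x p1 y p2 :
  path e x (p1 ++ y :: p2) -> uniq (x :: p1 ++ y :: p2) -> p1 != [::] -> ~~ e x y.
Proof.
move=> pxy uxy p1n; apply/negP => exy.
apply: (negP (e_acyc (c := x :: rcons p1 y) _ _)).
- by rewrite /= size_rcons; case: p1 p1n {pxy uxy}.
- apply: subseq_uniq uxy; rewrite /= eqxx -cats1.
  by apply: cat_subseq (subseq_refl _) _; rewrite sub1seq mem_head.
- rewrite /cycle /= rcons_path last_rcons -cats1 cat_path /=.
  by move: pxy; rewrite cat_path /= (e_sym y) exy => /and3P [-> -> _].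
Qed.

Lemma exists_low_degree (W : {set V}) :
  W != set0 -> exists2 v, v \in W & \sum_(y in W) e v y <= 1.
Proof.
case/set0Pn => x0 x0W; apply/exists_inP; apply: contraT => /exists_inPn high.
have other v z : v \in W -> exists y, [&& y \in W, e v y & y != z].
  move=> vW; apply/existsP; apply: contraT => /existsPn none.
  have : \sum_(y in W) e v y <= \sum_(y in W) (y == z).
    by apply: leq_sum => y yW; move: (none y); rewrite yW; case: (e v y); case: (y == z).
  have : \sum_(y in W) (y == z) <= 1.
    rewrite sum_boolE -(cards1 z); apply: subset_leq_card.
    by apply/subsetP => y; rewrite !inE => /andP [_ ->].
  by move: (high v vW); rewrite -ltnNge; lia.
suff long m : exists x p, [/\ x \in W, path e x p, uniq (x :: p) & size p = m].
  have [x [p [_ _ uxp sz]]] := long #|V|.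
  by have := max_card (mem (x :: p)); rewrite (card_uniqP uxp) /= sz ltnn.
elim: m => [|m [x [p [xW pxp uxp <-]]]]; first by exists x0, [::].
have [y /and3P [yW exy yz]] := other x (head x p) xW.
have yxp : y \notin x :: p.
  rewrite inE; apply/norP; split; first by apply: contraTneq exy => ->; rewrite e_irr.
  apply/negP => yp; case/splitPr: yp pxp uxp yz => p1 p2 pxp uxp yz.
  apply/negP: exy; apply: acyclic_no_chord pxp uxp _.
  by case: p1 yz => //=; rewrite eqxx.
by exists y, (x :: p); split; rewrite //= ?yxp // e_sym exy.
Qed.

Lemma sum_degree_setD1 (W : {set V}) v : v \in W ->
  \sum_(u in W) \sum_(y in W) e u y =
  2 * \sum_(y in W :\ v) e v y + \sum_(u in W :\ v) \sum_(y in W :\ v) e u y.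
Proof.
move=> vW; rewrite (big_setD1 v vW) /= (big_setD1 v vW) /= e_irr add0n.
under [X in _ + X = _]eq_bigr => u _ do rewrite (big_setD1 v vW) /= (e_sym u v).
by rewrite big_split /=; lia.
Qed.

Lemma forest_degree_sum (W : {set V}) :
  W != set0 -> \sum_(u in W) \sum_(y in W) e u y + 2 <= 2 * #|W|.
Proof.
move Hn: #|W| => n; elim: n W Hn => [|n IH] W cardW W0.
  by move: W0; rewrite -card_gt0 cardW.
have [v vW low] := exists_low_degree W0.
have cardWv : #|W :\ v| = n by move: cardW; rewrite (cardsD1 v W) vW => -[].
move: low; rewrite (sum_degree_setD1 vW) (big_setD1 v vW) /= e_irr add0n.
have [->|Wv0] := eqVneq (W :\ v) set0; first by rewrite !big_set0; lia.
by have := IH _ cardWv Wv0; lia.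
Qed.

Lemma sum_degree_subset (A B : {set V}) : A \subset B ->
  \sum_(u in A) \sum_(y in B) e u y <=
  \sum_(u in A) \sum_(y in A) e u y + \sum_(u in B :\: A) \sum_(y in B) e u y.
Proof.
move=> /setIidPr BA.
have splitB u : \sum_(y in B) e u y = \sum_(y in A) e u y + \sum_(y in B :\: A) e u y.
  by rewrite (big_setID A) /= BA.
under eq_bigr => u _ do rewrite splitB.
rewrite big_split /= leq_add2l exchange_big /=; apply: leq_sum => y _.
by under eq_bigr => u _ do rewrite e_sym; rewrite splitB leq_addr.
Qed.

End Forest.

Section Matching.
Variables (T : finType) (r : rel T).
Hypotheses (r_sym : symmetric r) (r_irr : irreflexive r).

Definition matching (M : {set T * T}) : bool :=
  [forall q in M, r q.1 q.2] &&
  [forall q in M, forall q' in M, (q != q') ==>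
     [&& q.1 != q'.1, q.1 != q'.2, q.2 != q'.1 & q.2 != q'.2]].

Definition matched (M : {set T * T}) : {set T} :=
  [set q.1 | q in M] :|: [set q.2 | q in M].

Lemma matching0 : matching set0.
Proof. by apply/andP; split; apply/forall_inP => q; rewrite inE. Qed.

Lemma matching_rel M q : matching M -> q \in M -> r q.1 q.2.
Proof. by case/andP => /forall_inP rM _; apply: rM. Qed.

Lemma matching_disjoint M q q' : matching M -> q \in M -> q' \in M -> q != q' ->
  [&& q.1 != q'.1, q.1 != q'.2, q.2 != q'.1 & q.2 != q'.2].
Proof.
by case/andP => _ /forall_inP M2 qM q'M; apply/implyP; apply: (forall_inP (M2 q qM)).
Qed.

Lemma card_matched M : #|matched M| <= 2 * #|M|.
Proof. by rewrite (leq_trans (leq_card_setU _ _)) // mul2n -addnn leq_add ?leq_imset_card. Qed.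

Definition max_matching := [arg max_(M > set0 | matching M) #|M|].

Lemma max_matchingP :
  matching max_matching /\ forall M, matching M -> #|M| <= #|max_matching|.
Proof. by rewrite /max_matching; case: arg_maxnP => [|M]; [exact: matching0 | split]. Qed.

Local Notation Mx := max_matching.

Lemma max_matching_cover u v : r u v -> (u \in matched Mx) || (v \in matched Mx).
Proof.
move=> ruv; apply: contraT; rewrite negb_or /matched !inE => /andP [uM vM].
have [M_matching M_max] := max_matchingP.
have fresh q : q \in Mx -> [&& u != q.1, u != q.2, v != q.1 & v != q.2].
  move=> qM; move: uM vM; rewrite !negb_or => /andP [u1 u2] /andP [v1 v2].
  by apply/and4P; split; [move: u1 | move: u2 | move: v1 | move: v2];
    apply: contraNneq => ->; apply: imset_f.
have uv_fresh : (u, v) \notin Mx by apply/negP => /fresh /=; rewrite eqxx.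
suff /M_max : matching ((u, v) |: Mx) by rewrite cardsU1 uv_fresh ltnn.
apply/andP; split.
  apply/forall_inP => q; rewrite in_setU1 => /predU1P [-> //|]; exact: matching_rel.
apply/forall_inP => q qM; apply/forall_inP => q' q'M; apply/implyP => qq'.
move: qM q'M; rewrite !in_setU1 => /predU1P [Eq|qM] /predU1P [Eq'|q'M].
- by move: qq'; rewrite Eq Eq' eqxx.
- by rewrite Eq; case/and4P: (fresh _ q'M) => /= -> -> -> ->.
- by rewrite Eq'; case/and4P: (fresh _ qM) => /= ? ? ? ?; apply/and4P; split; rewrite eq_sym.
- exact: matching_disjoint M_matching qM q'M qq'.
Qed.

(* Every edge meets a matched vertex, and an edge of the matching meets two. *)
Lemma max_matching_pair_count u v :
  r u v + ((u, v) \in Mx) + ((v, u) \in Mx) <=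
  r u v * (u \in matched Mx) + r u v * (v \in matched Mx).
Proof.
have [M_matching _] := max_matchingP.
have in_matched q : q \in Mx -> (q.1 \in matched Mx) && (q.2 \in matched Mx).
  by move=> qM; rewrite !inE !imset_f ?orbT.
have [uvM|uvM] := boolP ((u, v) \in Mx).
  have /= ruv := matching_rel M_matching uvM.
  have /andP [/= -> ->] := in_matched _ uvM.
  suff -> : (v, u) \in Mx = false by rewrite ruv.
  apply/negP => vuM; have uv : (u, v) != (v, u).
    by apply: contraTneq ruv => -[->]; rewrite r_irr.
  by have := matching_disjoint M_matching uvM vuM uv; rewrite eqxx andbF.
have [vuM|vuM] := boolP ((v, u) \in Mx).
  have /= rvu := matching_rel M_matching vuM.
  by have /andP [/= -> ->] := in_matched _ vuM; rewrite r_sym rvu.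
have [ruv|] := boolP (r u v); last by [].
by have := max_matching_cover ruv; case: (u \in _); case: (v \in _).
Qed.

(* Summing [max_matching_pair_count] over all ordered pairs, the right-hand side
   becomes twice the total degree of the matched vertices. *)
Lemma max_matching_count d : (forall u, \sum_v r u v <= d) ->
  \sum_u \sum_v r u v + 2 * #|Mx| <= 4 * d * #|Mx|.
Proof.
move=> deg_le.
have card_pairs : \sum_u \sum_v ((u, v) \in Mx) = #|Mx|.
  by rewrite pair_bigA /= sum_boolE; apply: eq_card => -[u v]; rewrite !inE.
have : \sum_u \sum_v (r u v + ((u, v) \in Mx) + ((v, u) \in Mx)) <=
        \sum_u \sum_v (r u v * (u \in matched Mx) + r u v * (v \in matched Mx)).
  by apply: leq_sum => u _; apply: leq_sum => v _; apply: max_matching_pair_count.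
under eq_bigr => u _ do rewrite !big_split.
under [X in _ <= X]eq_bigr => u _ do rewrite big_split -!big_distrl /=.
rewrite !big_split /= card_pairs [X in _ + X]exchange_big /= card_pairs.
rewrite [X in _ <= _ + X]exchange_big /=.
under [X in _ <= _ + X]eq_bigr => u _ do under eq_bigr => v _ do rewrite r_sym.
under [X in _ <= _ + X]eq_bigr => u _ do rewrite -big_distrl /=.
have : \sum_u (\sum_v r u v) * (u \in matched Mx) <= d * #|matched Mx|.
  rewrite -sum1_card big_distrr [X in _ <= X]big_mkcond /=; apply: leq_sum => u _.
  by case: (u \in matched Mx); rewrite ?muln1 ?muln0 ?deg_le.
have := leq_mul (leqnn d) (card_matched Mx).
set m := #|Mx|; set vm := #|matched Mx|; lia.
Qed.

End Matching.

Lemma matchingU (T : finType) (r1 r2 : rel T) (M1 M2 : {set T * T}) :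
  symmetric r1 -> symmetric r2 -> (forall u v w, r1 u v -> ~~ r2 u w) ->
  matching r1 M1 -> matching r2 M2 ->
  matching (relU r1 r2) (M1 :|: M2) /\ #|M1 :|: M2| = #|M1| + #|M2|.
Proof.
move=> sym1 sym2 r12 M1m M2m.
have apart q q' : q \in M1 -> q' \in M2 ->
    [&& q.1 != q'.1, q.1 != q'.2, q.2 != q'.1 & q.2 != q'.2].
  move=> /(matching_rel M1m) r1q /(matching_rel M2m) r2q'.
  have no1 w : ~~ r2 q.1 w by apply: r12 r1q.
  have no2 w : ~~ r2 q.2 w by apply: r12 q.1 _ _; rewrite sym1.
  have r2q'' : r2 q'.2 q'.1 by rewrite sym2.
  apply/and4P; split; apply/eqP => E.
  - by move: (no1 q'.2); rewrite E r2q'.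
  - by move: (no1 q'.1); rewrite E r2q''.
  - by move: (no2 q'.2); rewrite E r2q'.
  - by move: (no2 q'.1); rewrite E r2q''.
split; last first.
  rewrite cardsU; suff -> : M1 :&: M2 = set0 by rewrite cards0 subn0.
  apply/setP => q; rewrite !inE; apply/andP => -[qM1 qM2].
  by have := apart _ _ qM1 qM2; rewrite eqxx.
apply/andP; split.
  apply/forall_inP => q; rewrite inE /=.
  by case/orP => [/(matching_rel M1m) -> | /(matching_rel M2m) ->]; rewrite ?orbT.
apply/forall_inP => q qM; apply/forall_inP => q' q'M; apply/implyP => qq'.
move: qM q'M; rewrite !inE => /orP [qM|qM] /orP [q'M|q'M].
- exact: matching_disjoint M1m qM q'M qq'.
- exact: apart.
- by case/and4P: (apart _ _ q'M qM) => ? ? ? ?; apply/and4P; split; rewrite eq_sym.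
- exact: matching_disjoint M2m qM q'M qq'.
Qed.

Section Tree.
Variables (X V : finType) (e : rel V) (lab : X -> V).
Hypotheses (tree : binary_phylo_tree e lab) (X_ge4 : 4 <= #|X|).

Let e_sym : symmetric e. Proof. by case: tree => [[[[]]]]. Qed.
Let e_irr : irreflexive e. Proof. by case: tree => [[[[]]]]. Qed.
Let e_conn : connected_graph e. Proof. by case: tree => [[[_ []]]]. Qed.
Let e_acyc : acyclic e. Proof. by case: tree => [[[_ []]]]. Qed.
Let lab_inj : injective lab. Proof. by case: tree => [[_ []]]. Qed.
Let leafP v : is_leaf e v <-> exists x, lab x = v. Proof. by case: tree => [[_ [_]]]. Qed.
Let e_bin : binary e. Proof. by case: tree. Qed.

Local Notation leaf := (is_leaf e).

Lemma leaf_lab x : leaf (lab x).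
Proof. by apply/leafP; exists x. Qed.

Lemma lab_neq_interior x v : ~~ leaf v -> lab x != v.
Proof. by apply: contraNneq => <-; apply: leaf_lab. Qed.

Lemma leaf_nbr_unique v y y' : leaf v -> e v y -> e v y' -> y = y'.
Proof.
move=> /cards1P [z nbrs] evy evy'.
have : y \in [set y | e v y] by rewrite inE.
have : y' \in [set y | e v y] by rewrite inE.
by rewrite nbrs !inE => /eqP -> /eqP ->.
Qed.

Definition parent x := odflt (lab x) [pick y | e (lab x) y].

Lemma parent_adj x : e (lab x) (parent x).
Proof.
rewrite /parent; case: pickP => [y -> // | none].
have := leaf_lab x; rewrite /is_leaf /deg.
by rewrite (_ : [set y | e (lab x) y] = set0) ?cards0 //; apply/setP => y; rewrite !inE none.
Qed.

Lemma parentE x y : e (lab x) y -> parent x = y.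
Proof. by move=> exy; apply: leaf_nbr_unique (leaf_lab x) (parent_adj x) exy. Qed.

Lemma closed_full (K : {set V}) u v :
  (forall a b, a \in K -> e a b -> b \in K) -> u \in K -> v \in K.
Proof.
move=> K_closed; have /connectP [p + ->] := e_conn u v.
by elim: p u => [|w p IH] u //= /andP [euw pw] uK; apply: IH pw (K_closed _ _ uK euw).
Qed.

Lemma card_X_le (K : {set V}) : (forall x, lab x \in K) -> #|X| <= #|K|.
Proof.
move=> labK; rewrite -cardsT -(card_imset _ lab_inj); apply: subset_leq_card.
by apply/subsetP => v /imsetP [x _ ->].
Qed.

Lemma parent_interior x : ~~ leaf (parent x).
Proof.
apply/negP => leaf_px; set K := [set lab x; parent x].
have K_closed a b : a \in K -> e a b -> b \in K.
  rewrite !inE => /orP [] /eqP -> eab; first by rewrite (parentE eab) eqxx orbT.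
  by rewrite (leaf_nbr_unique leaf_px eab (_ : e _ (lab x))) ?eqxx // e_sym parent_adj.
have := card_X_le (fun y => closed_full (lab y) K_closed (setU11 _ _)).
by rewrite /K cards2; move: X_ge4; case: (_ != _); lia.
Qed.

Definition nleaves w := #|[set x | parent x == w]|.

Lemma leaf_nbrsE w : #|[set y | e w y & leaf y]| = nleaves w.
Proof.
rewrite /nleaves -(card_imset _ lab_inj); apply: eq_card => y; rewrite !inE.
apply/andP/imsetP => [[ewy /leafP [x lx]] | [x]]; last first.
  by rewrite inE => /eqP <- ->; rewrite e_sym parent_adj leaf_lab.
by exists x; rewrite // inE (parentE (_ : e _ w)) // lx e_sym.
Qed.

Lemma deg_split w :
  deg e w = #|[set y | e w y & leaf y]| + #|[set y | e w y & ~~ leaf y]|.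
Proof.
rewrite /deg -!sum_boolT -big_split /=.
by apply: eq_bigr => y _; case: (e w y); case: (leaf y).
Qed.

Lemma nleaves_le2 w : nleaves w <= 2.
Proof.
rewrite leqNgt; apply/negP => nleaves_gt2.
have := deg_split w; rewrite leaf_nbrsE.
case: (e_bin w) => [deg1 | deg3]; first by rewrite deg1; lia.
rewrite deg3 => split3.
have nbrs_leaf y : e w y -> leaf y.
  move=> ewy; apply: contraT => interior_y.
  have : 0 < #|[set y | e w y & ~~ leaf y]| by apply/card_gt0P; exists y; rewrite inE ewy.
  lia.
set K := w |: [set y | e w y].
have K_closed a b : a \in K -> e a b -> b \in K.
  rewrite !inE => /predU1P [-> -> | ewa eab]; first by rewrite orbT.
  by rewrite (leaf_nbr_unique (nbrs_leaf _ ewa) eab (_ : e a w)) ?eqxx // e_sym.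
have lab_nbr x : lab x \in [set y | e w y].
  have := closed_full (lab x) K_closed (setU11 _ _).
  by rewrite in_setU1 (negbTE (lab_neq_interior x _)) // /is_leaf deg3.
by have := card_X_le lab_nbr; rewrite -/(deg e w) deg3; lia.
Qed.

Definition interior := [set v | ~~ leaf v].
Definition cherries := [set w | nleaves w == 2].
Definition singles := [set w | nleaves w == 1].
Definition bare := [set w in interior | nleaves w == 0].

Lemma nleaves_interior w : 0 < nleaves w -> w \in interior.
Proof. by case/card_gt0P => x; rewrite !inE => /eqP <-; apply: parent_interior. Qed.

Lemma nleavesE w : nleaves w = 2 * (w \in cherries) + (w \in singles).
Proof. by rewrite !inE; have := nleaves_le2 w; case: (nleaves w) => [|[|[|]]]. Qed.

Lemma interiorE w :
  (w \in interior : nat) = (w \in cherries) + (w \in singles) + (w \in bare).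
Proof.
have := @nleaves_interior w; rewrite !inE; have := nleaves_le2 w.
by case: (nleaves w) => [|[|[|]]] //= _ in_w; [rewrite eqxx andbT | rewrite in_w ..].
Qed.

Lemma interior_degree w :
  w \in interior -> \sum_(y in interior) e w y + nleaves w = 3.
Proof.
rewrite inE => interior_w; have := deg_split w.
rewrite leaf_nbrsE sum_boolE addnC (eq_card (B := [set y | e w y & ~~ leaf y])).
  by move=> <-; case: (e_bin w) => deg_w //; move: interior_w; rewrite /is_leaf deg_w.
by move=> y; rewrite !inE andbC.
Qed.

Lemma sum_parent (F : V -> nat) : \sum_x F (parent x) = \sum_w nleaves w * F w.
Proof.
under [RHS]eq_bigr => w _ do rewrite /nleaves -sum_boolT big_distrl /=.
rewrite exchange_big /=; apply: eq_bigr => x _.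
by rewrite (bigD1 (parent x)) //= eqxx mul1n big1 ?addn0 // => w /negbTE; rewrite eq_sym => ->.
Qed.

Lemma card_X_nleaves : #|X| = \sum_w nleaves w.
Proof. by rewrite -sum1_card -[RHS](eq_bigr _ (fun w _ => muln1 _)) -sum_parent. Qed.

Lemma card_X : #|X| = 2 * #|cherries| + #|singles|.
Proof.
rewrite card_X_nleaves; under eq_bigr => w _ do rewrite nleavesE.
by rewrite big_split /= -big_distrr /= !sum_boolT !cardsE.
Qed.

Lemma card_interior : #|interior| = #|cherries| + #|singles| + #|bare|.
Proof.
rewrite -cardsE -sum_boolT; under eq_bigr => w _ do rewrite interiorE.
by rewrite !big_split /= !sum_boolT !cardsE.
Qed.

Lemma card_interior_le : #|interior| + 2 <= #|X|.
Proof.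
have /card_gt0P [x _] : 0 < #|X| by apply: leq_trans X_ge4.
have interior0 : interior != set0.
  by apply/set0Pn; exists (parent x); rewrite inE parent_interior.
have := forest_degree_sum e_sym e_irr e_acyc interior0.
have : \sum_(w in interior) (\sum_(y in interior) e w y + nleaves w) = #|interior| * 3.
  by rewrite -sum_nat_const; apply: eq_bigr interior_degree.
rewrite big_split /=.
suff -> : \sum_(w in interior) nleaves w = #|X| by move: #|X| => n; lia.
rewrite card_X_nleaves [RHS](bigID (mem interior)) /= [X in _ + X]big1 ?addn0 //.
by move=> w /negP w_leaf; apply/eqP; rewrite -leqn0 leqNgt; apply/negP => /nleaves_interior.
Qed.

Lemma card_bare : #|bare| + 2 <= #|cherries|.
Proof. by have := card_interior_le; rewrite card_interior card_X; lia. Qed.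

Lemma singles_interior : singles \subset interior.
Proof.
by apply/subsetP => w; rewrite inE => /eqP nleaves_w; apply: nleaves_interior; rewrite nleaves_w.
Qed.

Lemma card_singles : 2 * #|singles| <=
  \sum_(u in singles) \sum_(v in singles) e u v + #|cherries| + 3 * #|bare|.
Proof.
have <- : \sum_(u in singles) \sum_(y in interior) e u y = 2 * #|singles|.
  rewrite mulnC -sum_nat_const; apply: eq_bigr => u u_single.
  have := interior_degree (subsetP singles_interior _ u_single).
  by move: u_single; rewrite inE => /eqP ->; lia.
rewrite -addnA (leq_trans (sum_degree_subset e_sym singles_interior)) // leq_add2l.
have other_degree u : u \in interior :\: singles ->
    \sum_(y in interior) e u y = (u \in cherries) + 3 * (u \in bare).
  rewrite !inE => /andP [not_single interior_u].
  have := interior_degree (_ : u \in interior); rewrite inE interior_u => /(_ isT).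
  by move: not_single; have := nleaves_le2 u; case: (nleaves u) => [|[|[|]]] //=; lia.
rewrite (eq_bigr _ other_degree) -[#|cherries|]cardsE -[#|bare|]cardsE -!sum_boolT.
rewrite big_distrr -big_split /= [X in X <= _]big_mkcond /=.
by apply: leq_sum => u _; case: (_ \in _).
Qed.

Definition siblings : rel X := fun a b => (a != b) && (parent a == parent b).

Definition linked : rel X :=
  fun a b => [&& parent a \in singles, parent b \in singles & e (parent a) (parent b)].

Lemma siblings_sym : symmetric siblings.
Proof. by move=> a b; rewrite /siblings eq_sym [parent a == _]eq_sym. Qed.

Lemma linked_sym : symmetric linked.
Proof. by move=> a b; rewrite /linked andbCA e_sym. Qed.

Lemma siblings_irr : irreflexive siblings.
Proof. by move=> a; rewrite /siblings eqxx. Qed.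

Lemma linked_irr : irreflexive linked.
Proof. by move=> a; rewrite /linked e_irr !andbF. Qed.

Lemma siblings_linked_apart a b c : siblings a b -> ~~ linked a c.
Proof.
case/andP=> ab /eqP pab; rewrite /linked inE; apply/nandP; left; apply/eqP => single_a.
suff : 1 < nleaves (parent a) by rewrite single_a.
by rewrite /nleaves (cardsD1 a) (cardsD1 b) !inE pab eqxx (eq_sym b) ab.
Qed.

Lemma siblings_degree a : \sum_b siblings a b = (nleaves (parent a)).-1.
Proof.
rewrite sum_boolT /nleaves [in RHS](cardsD1 a) inE eqxx /=.
by apply: eq_card => b; rewrite !inE /siblings eq_sym (eq_sym (parent b)).
Qed.

Lemma sum_siblings : \sum_a \sum_b siblings a b = 2 * #|cherries|.
Proof.
under eq_bigr => a _ do rewrite siblings_degree.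
rewrite (sum_parent (fun w => (nleaves w).-1)) -[#|cherries|]cardsE -sum_boolT big_distrr.
by apply: eq_bigr => w _; rewrite inE; have := nleaves_le2 w; case: (nleaves w) => [|[|[|]]].
Qed.

Lemma sum_parent_singles (F : V -> nat) :
  \sum_x (parent x \in singles) * F (parent x) = \sum_(w in singles) F w.
Proof.
rewrite (sum_parent (fun w => (w \in singles) * F w)) [RHS]big_mkcond /=.
by apply: eq_bigr => w _; rewrite inE; case: eqP => [->|]; rewrite ?mul1n ?muln0.
Qed.

Lemma linked_degree a :
  \sum_b linked a b = (parent a \in singles) * \sum_(v in singles) e (parent a) v.
Proof.
rewrite -sum_parent_singles big_distrr /=; apply: eq_bigr => b _.
by rewrite /linked; case: (parent a \in singles); case: (parent b \in singles); case: (e _ _).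
Qed.

Lemma sum_linked : \sum_a \sum_b linked a b = \sum_(u in singles) \sum_(v in singles) e u v.
Proof.
under eq_bigr => a _ do rewrite linked_degree.
exact: (sum_parent_singles (fun u => \sum_(v in singles) e u v)).
Qed.

Lemma siblings_degree_le a : \sum_b siblings a b <= 1.
Proof. by rewrite siblings_degree; have := nleaves_le2 (parent a); lia. Qed.

Lemma linked_degree_le a : \sum_b linked a b <= 2.
Proof.
rewrite linked_degree; case: (boolP (parent a \in singles)) => //= single_pa.
rewrite mul1n (leq_trans (leq_sum_subset _ singles_interior)) //.
have := interior_degree (subsetP singles_interior _ single_pa).
by move: single_pa; rewrite inE => /eqP ->; lia.
Qed.

Definition partners : rel X := fun a b => siblings a b || linked a b.

(* The cherries are paired by a maximum matching of [siblings] as well: as no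
   leaf has two siblings, such a matching takes every cherry. *)
Lemma leaf_matching : exists M : {set X * X}, matching partners M /\ #|X| <= 4 * #|M|.
Proof.
have := max_matching_count siblings_sym siblings_irr siblings_degree_le.
have := max_matching_count linked_sym linked_irr linked_degree_le.
rewrite sum_siblings sum_linked.
have [[Mc_matching _] [Ms_matching _]] := (max_matchingP siblings, max_matchingP linked).
have [M_matching cardM] :=
  matchingU siblings_sym linked_sym siblings_linked_apart Mc_matching Ms_matching.
exists (max_matching siblings :|: max_matching linked); split => //.
rewrite cardM card_X; have := card_bare; have := card_singles.
lia.
Qed.

Lemma partners_cases a b : partners a b ->
  (a != b /\ parent a = parent b) \/ (parent a != parent b /\ e (parent a) (parent b)).
Proof.
case/orP => [/andP [ab /eqP pab] | /and3P [_ _ epab]]; first by left.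
by right; split=> //; apply: contraTneq epab => ->; rewrite e_irr.
Qed.

Lemma partners_neq a b : partners a b -> a != b.
Proof. by case/partners_cases => [[] | [pab _]] //; apply: contraNneq pab => ->. Qed.

Definition pair_path a b : seq V :=
  if parent a == parent b then [:: parent a; lab b] else [:: parent a; parent b; lab b].

Lemma pair_path_simple a b : partners a b ->
  simple_path e (lab a) (lab b) (pair_path a b) /\
  (size (pair_path a b) = 2 \/ size (pair_path a b) = 3).
Proof.
move=> ab; have lab_ab : lab a != lab b by rewrite (inj_eq lab_inj) partners_neq.
have [ia ib] := (parent_interior a, parent_interior b).
rewrite /pair_path /simple_path; case: (partners_cases ab) => [[_ pab] | [pab epab]].
  have ea : e (lab a) (parent b) by rewrite -pab parent_adj.
  rewrite pab eqxx /= ea e_sym parent_adj eqxx !inE !negb_or lab_ab.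
  by rewrite (lab_neq_interior a ib) eq_sym (lab_neq_interior b ib); split; [|left].
rewrite (negbTE pab) /= parent_adj epab e_sym parent_adj eqxx !inE !negb_or lab_ab pab.
rewrite !(lab_neq_interior a) // !(eq_sym (parent _) (lab b)) !(lab_neq_interior b) //.
by split; [|right].
Qed.

Definition pendant x : {set V} := [set lab x; parent x].

Lemma pair_path_edges a b : partners a b ->
  {subset path_edges (lab a) (pair_path a b) <=
          [:: pendant a; pendant b; [set parent a; parent b]]}.
Proof.
rewrite /pair_path /path_edges /pendant => /partners_cases [[_ pab] | [pab _]].
  rewrite pab eqxx /= => E; rewrite !inE => /orP [] /eqP ->; first by rewrite eqxx.
  by rewrite setUC eqxx orbT.
rewrite (negbTE pab) /= => E; rewrite !inE => /or3P [] /eqP ->; first by rewrite eqxx.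
  by rewrite eqxx !orbT.
by rewrite setUC eqxx orbT.
Qed.

Lemma single_parent_inj x y : parent x \in singles -> parent y = parent x -> y = x.
Proof.
rewrite inE => /cards1P [z leaves_px] pyx.
have : x \in [set z | parent z == parent x] by rewrite inE.
have : y \in [set z | parent z == parent x] by rewrite inE pyx.
by rewrite leaves_px !inE => /eqP -> /eqP ->.
Qed.

(* This keeps the middle edge of a path of length 3 private to its pair. *)
Lemma partners_parent_leaves a b x : partners a b ->
  parent x \in [set parent a; parent b] -> (x == a) || (x == b).
Proof.
case/orP => [/andP [ab /eqP pab] | /and3P [single_a single_b _]]; last first.
  by rewrite !inE => /orP [] /eqP /single_parent_inj ->; rewrite ?eqxx ?orbT.
rewrite !inE -pab orbb => /eqP pxa; apply: contraT; rewrite negb_or => /andP [xa xb].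
have := nleaves_le2 (parent a); rewrite /nleaves (cardsD1 a) (cardsD1 b) (cardsD1 x) !inE.
by rewrite eqxx (eq_sym b) ab -pab pxa eqxx xa xb.
Qed.

Lemma pendant_inj : injective pendant.
Proof.
move=> x y pxy; have : lab x \in pendant y by rewrite -pxy setU11.
rewrite !inE (negbTE (lab_neq_interior x (parent_interior y))) orbF.
by move/eqP/lab_inj.
Qed.

Lemma pendant_neq_parents x y z : pendant x != [set parent y; parent z].
Proof.
apply/negP => /eqP pxyz; have : lab x \in [set parent y; parent z] by rewrite -pxyz setU11.
by rewrite !inE !(negbTE (lab_neq_interior x (parent_interior _))).
Qed.

Lemma partners_paths_disjoint a b a' b' E : partners a b -> partners a' b' ->
  [&& a != a', a != b', b != a' & b != b'] ->
  E \in path_edges (lab a) (pair_path a b) -> E \notin path_edges (lab a') (pair_path a' b').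
Proof.
move=> ab a'b' /and4P [aa' ab' ba' bb'] /(pair_path_edges ab) Eab.
apply/negP => /(pair_path_edges a'b'); move: Eab; rewrite !inE.
have pendants x y : x != y -> pendant x == pendant y = false.
  by move=> xy; apply: contraNF xy => /eqP /pendant_inj ->.
have pendant_parents x y z : pendant x == [set parent y; parent z] = false.
  exact/negbTE/pendant_neq_parents.
case/or3P => /eqP ->; rewrite ?pendants // ?pendant_parents //.
rewrite ![[set parent a; _] == _]eq_sym !pendant_parents /= => /eqP parents.
have : parent a \in [set parent a'; parent b'] by rewrite parents setU11.
by move/(partners_parent_leaves a'b'); rewrite (negbTE aa') (negbTE ab').
Qed.

End Tree.

Theorem lemma3p2 (X V : finType) (e : rel V) (lab : X -> V) :
  binary_phylo_tree e lab -> 4 <= #|X| ->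
  exists (k : nat) (a b : 'I_k -> X) (P : 'I_k -> seq V),
    [/\ #|X| <= 4 * k,
        (forall i, a i != b i),
        (forall i j, i != j ->
           [/\ a i != a j, a i != b j, b i != a j & b i != b j]),
        (forall i, simple_path e (lab (a i)) (lab (b i)) (P i)
                   /\ (size (P i) = 2 \/ size (P i) = 3)) &
        (forall i j, i != j ->
           forall E, E \in path_edges (lab (a i)) (P i) ->
                     E \notin path_edges (lab (a j)) (P j))].
Proof.
move=> tree X_ge4; have [M [M_matching M_large]] := leaf_matching tree X_ge4.
pose q (i : 'I_#|M|) := enum_val i.
have partners_q i : partners e lab (q i).1 (q i).2.
  exact: matching_rel M_matching (enum_valP i).
have apart i j : i != j ->
    [&& (q i).1 != (q j).1, (q i).1 != (q j).2, (q i).2 != (q j).1 & (q i).2 != (q j).2].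
  move=> ij; apply: matching_disjoint M_matching (enum_valP _) (enum_valP _) _.
  by rewrite (inj_eq enum_val_inj).
exists #|M|, (fun i => (q i).1), (fun i => (q i).2), (fun i => pair_path e lab (q i).1 (q i).2).
split=> // [i | i j /apart /and4P [] // | i | i j /apart ij E].
- exact: (partners_neq tree (partners_q i)).
- exact: (pair_path_simple tree X_ge4 (partners_q i)).
- exact: (partners_paths_disjoint tree X_ge4 (partners_q i) (partners_q j) ij).
Qed.
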